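(* Let $p>q>1$ be relatively prime integers, let $\mathbf{x}$ be a $\frac pq$-automatic sequence produced by the deterministic finite automaton with output $\mathcal{A}=(Q,q_0,A_p,\delta,\tau)$, and let $T(L_{\frac pq})$ be decorated by $\mathbf{x}$. Then for all $h\ge 1$, the number $\#F_h$ of distinct factors of height $h$ of $T(L_{\frac pq})$ satisfies $\#F_h\le 1+q^h\cdot\#Q$.
   Context: $A_p=\{0,\ldots,p-1\}$; for $w=w_\ell\cdots w_0\in A_p^*$, $\mathrm{val}_{\frac pq}(w)=\sum_{i=0}^{\ell}\frac{w_i}{q}(\frac pq)^i$; $\mathrm{rep}_{\frac pq}(n)$ is the unique word not starting with $0$ of value $n$ ($\mathrm{rep}_{\frac pq}(0)=\varepsilon$); $L_{\frac pq}=\{\mathrm{rep}_{\frac pq}(n):n\ge0\}$. $\mathbf{x}$ is $\frac pq$-automatic via $\mathcal{A}$ if $x_n=\tau(\delta(q_0,\mathrm{rep}_{\frac pq}(n)))$ for all $n$. $T(L_{\frac pq})$ is the tree whose nodes are the words of $L_{\frac pq}$, with an edge labeled $d$ from $w$ to $wd$ whenever $w,wd\in L_{\frac pq}$; node $w$ has decoration $x_{\mathrm{val}_{\frac pq}(w)}$. For $w\in L_{\frac pq}$ and $h\ge0$, the factor $T[w,h]$ has domain $w^{-1}L_{\frac pq}\cap A_p^{\le h}$ and node $u$ of it has decoration $x_{\mathrm{val}_{\frac pq}(wu)}$; two factors of height $h$ are equal if they have the same domain and the same decoration at each node. $F_h=\{T[w,h]: w\in L_{\frac pq}\}$. *)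

From HB Require Import structures.
From mathcomp Require Import all_boot all_order all_algebra.
Set Implicit Arguments. Unset Strict Implicit. Unset Printing Implicit Defensive.
Import Order.TTheory GRing.Theory Num.Theory.
Local Open Scope ring_scope.

(* Words over A_p = {0,...,p-1} are [seq 'I_p], written most significant
   digit first: the word w_l ... w_0 is the list [:: w_l; ...; w_0]. *)

Definition valpq (p q : nat) (w : seq 'I_p) : rat :=
  let r := rev (map (@nat_of_ord p) w) in
  \sum_(i < size w) ((nth 0%N r i)%:R / q%:R) * (p%:R / q%:R) ^+ i.

Definition no_lead0 (p : nat) (w : seq 'I_p) : bool :=
  if w is d :: _ then (d : nat) != 0%N else true.

(* Membership in L_{p/q}: w is rep_{p/q}(n) for some n, i.e. w does not start
   with 0 and its value is a natural number n (rep_{p/q}(n) being the unique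
   such word). *)
Definition inL (p q : nat) (w : seq 'I_p) : bool :=
  no_lead0 w && (valpq q w \is a Num.nat).

Definition valn (p q : nat) (w : seq 'I_p) : nat := Num.truncn (valpq q w).

Definition delta_star (p : nat) (Q : Type) (delta : Q -> 'I_p -> Q)
  (s : Q) (w : seq 'I_p) : Q := foldl delta s w.

Definition pq_automatic (p q : nat) (Q : Type) (Out : Type)
  (q0 : Q) (delta : Q -> 'I_p -> Q) (tau : Q -> Out) (x : nat -> Out) : Prop :=
  forall w : seq 'I_p, inL q w -> x (valn q w) = tau (delta_star delta q0 w).

(* The factor T[w,h] of the tree T(L_{p/q}) decorated by x: a function on the
   words u of length <= h, equal to None if u is not in the domain
   w^{-1}L_{p/q} /\ A_p^{<=h}, and to Some x_{val(wu)} otherwise.  Two factors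
   of height h are equal iff they have the same domain and decorations, i.e.
   iff these finite functions are equal. *)
Definition factor (p q : nat) (Out : Type) (x : nat -> Out)
  (w : seq 'I_p) (h : nat) : {ffun h.-bseq 'I_p -> option Out} :=
  [ffun u : h.-bseq 'I_p =>
     if inL q (w ++ u) then Some (x (valn q (w ++ u))) else None].

From HB Require Import structures.
From mathcomp Require Import all_boot all_order all_algebra.
From mathcomp Require Import ring.
From Stdlib Require Import Classical_Prop.
Set Implicit Arguments. Unset Strict Implicit. Unset Printing Implicit Defensive.
Import Order.TTheory GRing.Theory Num.Theory.
Local Open Scope ring_scope.

(* For a nonempty word w of L_{p/q} and |u| <= h, whether wu lies in L_{p/q}
   depends only on val(w) mod q^h: val(wu) = val(w) (p/q)^|u| + val(u), and
   changing val(w) by a multiple of q^h changes this by an integer.  Hence the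
   factor T[w,h] is determined by val(w) mod q^h and the state reached on w,
   and the empty word contributes one more factor. *)

Lemma valpq_cat (p q : nat) (w u : seq 'I_p) :
  valpq q (w ++ u) = valpq q w * (p%:R / q%:R) ^+ size u + valpq q u.
Proof.
rewrite /valpq.
rewrite -!(big_mkord xpredT (fun i => (nth 0%N _ i)%:R / q%:R * (p%:R / q%:R) ^+ i)).
rewrite size_cat addnC [LHS](@big_cat_nat _ _ _ (size u)) ?leq_addr //= addrC.
congr (_ + _).
  rewrite -{1}(add0n (size u)) big_addn addKn mulr_suml.
  apply: eq_bigr => i _.
  rewrite map_cat rev_cat nth_cat size_rev size_map ltnNge leq_addl /= addnK.
  by rewrite exprD mulrA.
apply: eq_big_nat => i /andP[_ lt_i_u].
by rewrite map_cat rev_cat nth_cat size_rev size_map lt_i_u.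
Qed.

Lemma valpq_ge0 (p q : nat) (w : seq 'I_p) : 0 <= valpq q w.
Proof.
by apply: sumr_ge0 => i _; rewrite !mulr_ge0 ?invr_ge0 ?exprn_ge0 ?divr_ge0 ?ler0n.
Qed.

Lemma inL_cat (p q : nat) (w u : seq 'I_p) : w != [::] -> inL q w ->
  inL q (w ++ u) = ((valn q w)%:R * (p%:R / q%:R) ^+ size u + valpq q u \is a Num.nat).
Proof.
case: w => // d w _ /andP[lead_d /truncnK val_w].
by rewrite /inL valpq_cat /valn val_w /=; move: lead_d => /= ->.
Qed.

Lemma eqn_mod_scale_int (p q h k a b : nat) : (0 < q)%N -> (k <= h)%N ->
  a = b %[mod q ^ h] -> (a%:R - b%:R) * (p%:R / q%:R) ^+ k \is a @Num.int rat.
Proof.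
move=> q_gt0 le_k_h eq_ab.
have -> : (a%:R - b%:R) * (p%:R / q%:R) ^+ k =
    ((a %/ q ^ h)%:R - (b %/ q ^ h)%:R) * (q ^ (h - k) * p ^ k)%:R :> rat.
  rewrite {1}(divn_eq a (q ^ h)) {1}(divn_eq b (q ^ h)) eq_ab -(subnKC le_k_h).
  rewrite addKn !natrD !natrM !natrX exprD expr_div_n.
  have qk_neq0 : (q%:R : rat) ^+ k != 0 by rewrite expf_neq0 // pnatr_eq0 -lt0n.
  by field.
by rewrite rpredM ?rpredB ?natr_int.
Qed.

Lemma inL_cat_congr (p q h : nat) (w1 w2 u : seq 'I_p) : (0 < q)%N ->
  w1 != [::] -> w2 != [::] -> inL q w1 -> inL q w2 ->
  valn q w1 = valn q w2 %[mod q ^ h] -> (size u <= h)%N ->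
  inL q (w1 ++ u) = inL q (w2 ++ u).
Proof.
move=> q_gt0 w1_neq0 w2_neq0 L_w1 L_w2 eq_mod le_u_h.
rewrite !inL_cat // !natrEint.
rewrite !addr_ge0 ?valpq_ge0 ?mulr_ge0 ?exprn_ge0 ?divr_ge0 ?ler0n // !andbT.
set r := (p%:R / q%:R) ^+ size u; set v := valpq q u.
have -> : (valn q w1)%:R * r + v =
    (valn q w2)%:R * r + v + ((valn q w1)%:R - (valn q w2)%:R) * r by ring.
by rewrite rpredDr // (eqn_mod_scale_int _ q_gt0 le_u_h eq_mod).
Qed.

Lemma factor_congr (p q h : nat) (Q : finType) (Out : eqType)
    (q0 : Q) (delta : Q -> 'I_p -> Q) (tau : Q -> Out) (x : nat -> Out)
    (w1 w2 : seq 'I_p) : (0 < q)%N -> pq_automatic q q0 delta tau x ->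
  w1 != [::] -> w2 != [::] -> inL q w1 -> inL q w2 ->
  valn q w1 = valn q w2 %[mod q ^ h] ->
  delta_star delta q0 w1 = delta_star delta q0 w2 ->
  factor q x w1 h = factor q x w2 h.
Proof.
move=> q_gt0 x_aut w1_neq0 w2_neq0 L_w1 L_w2 eq_mod eq_state.
apply/ffunP => u; rewrite !ffunE.
have eq_L := inL_cat_congr q_gt0 w1_neq0 w2_neq0 L_w1 L_w2 eq_mod (size_bseq u).
rewrite -eq_L; case: ifP => // L_w1u.
have L_w2u : inL q (w2 ++ u) by rewrite -eq_L.
by rewrite !x_aut // /delta_star !foldl_cat -!/(delta_star _ _ _) eq_state.
Qed.

Lemma image_factor_through_seq (A : Type) (K B : eqType)
    (P : A -> Prop) (key : A -> K) (f : A -> B) (ks : seq K) :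
  (forall a b, P a -> P b -> key a = key b -> f a = f b) ->
  exists s : seq B, uniq s /\
    (forall y, y \in s <-> exists a, [/\ P a, key a \in ks & f a = y]) /\
    (size s <= size ks)%N.
Proof.
move=> f_key; elim: ks => [|k ks [s [s_uniq [s_img s_size]]]].
  by exists [::]; split=> //; split=> // y; split=> // [[a []]].
(* Whether k is the key of some a with P a is not decidable in general. *)
have [[a0 [Pa0 key_a0]] | no_a0] := classic (exists a, P a /\ key a = k).
  exists (undup (f a0 :: s)); split; first exact: undup_uniq.
  split; last by rewrite (leq_trans (size_undup _)).
  move=> y; rewrite mem_undup in_cons; split.
    case/orP=> [/eqP -> | /s_img [a [Pa ks_a <-]]].
      by exists a0; rewrite in_cons key_a0 eqxx.
    by exists a; rewrite in_cons ks_a orbT.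
  case=> a [Pa]; rewrite in_cons => /orP[/eqP key_a | ks_a] <-.
    by rewrite (f_key a a0) ?key_a ?key_a0 ?eqxx.
  by apply/orP; right; apply/s_img; exists a.
exists s; split=> //; split; last exact: leqW.
move=> y; rewrite s_img; split=> [[a [Pa ks_a <-]] | [a [Pa]]].
  by exists a; rewrite in_cons ks_a orbT.
rewrite in_cons => /orP[/eqP key_a | ks_a] <-; last by exists a.
by case: no_a0; exists a.
Qed.

Lemma image_factor_through_finType (A : Type) (K : finType) (B : eqType)
    (P : A -> Prop) (key : A -> K) (f : A -> B) :
  (forall a b, P a -> P b -> key a = key b -> f a = f b) ->
  exists s : seq B, uniq s /\ (forall y, y \in s <-> exists a, P a /\ f a = y) /\
    (size s <= #|K|)%N.
Proof.
move=> f_key.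
have [s [s_uniq [s_img s_size]]] := image_factor_through_seq (enum K) f_key.
exists s; split=> //; split; last by rewrite cardE.
move=> y; rewrite s_img; split=> [[a [Pa _ <-]] | [a [Pa <-]]]; first by exists a.
by exists a; rewrite mem_enum.
Qed.

Theorem mainTheorem10 (p q : nat) (Q : finType) (Out : eqType)
  (q0 : Q) (delta : Q -> 'I_p -> Q) (tau : Q -> Out) (x : nat -> Out) :
  (1 < q)%N -> (q < p)%N -> coprime p q ->
  pq_automatic q q0 delta tau x ->
  forall h : nat, (1 <= h)%N ->
  (* F_h, listed without repetition as s, has at most 1 + q^h * #Q elements *)
  exists s : seq {ffun h.-bseq 'I_p -> option Out},
    uniq s /\
    (forall f, f \in s <-> exists w : seq 'I_p, inL q w /\ factor q x w h = f) /\
    (size s <= 1 + q ^ h * #|Q|)%N.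
Proof.
move=> q_gt1 _ _ x_aut h _.
have q_gt0 : (0 < q)%N := ltnW q_gt1.
have qh_gt0 : (0 < q ^ h)%N by rewrite expn_gt0 q_gt0.
pose key (w : seq 'I_p) : option ('I_(q ^ h) * Q) :=
  if w is [::] then None
  else Some (Ordinal (ltn_pmod (valn q w) qh_gt0), delta_star delta q0 w).
have factor_key w1 w2 : inL q w1 -> inL q w2 -> key w1 = key w2 ->
    factor q x w1 h = factor q x w2 h.
  case: w1 w2 => [|d1 w1] [|d2 w2] // L_w1 L_w2 [[eq_mod] eq_state].
  exact: factor_congr q_gt0 x_aut _ _ L_w1 L_w2 eq_mod eq_state.
have [s [s_uniq [s_img s_size]]] := image_factor_through_finType factor_key.
exists s; split=> //; split=> //.
by rewrite card_option card_prod card_ord -add1n in s_size.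
Qed.
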